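(* Let $Q$ be an ice fork with point of return $r$, let $j\neq r$ be a mutable vertex, and let $k\ne j$ be another mutable vertex. If $k$ is red or green in $Q$, then $k$ is red or green in $\mu_j(Q)$.
   Context: A quiver is a finite directed multigraph with no loops and no oriented 2-cycles, whose vertex set is partitioned into mutable and frozen vertices; arrows between two frozen vertices are ignored. $b_{ik}$ = number of arrows $i\to k$ minus number of arrows $k\to i$; $Q|_S$ is the induced subquiver on $S$; $[n]$ is the set of mutable vertices. Mutation $\mu_j$ at mutable $j$: for each path $i\to j\to k$ add $b_{ij}b_{jk}$ arrows $i\to k$, reverse all arrows at $j$, cancel 2-cycles. Abundant: at least 2 arrows between every pair of vertices at least one of which is mutable. $F^+(r)=\{i: r\to i\}$, $F^-(r)=\{j:j\to r\}$. A fork is an abundant non-acyclic quiver with at most one frozen vertex and a vertex $r$ (point of return) such that $b_{ij}>b_{ri}$ and $b_{ij}>b_{jr}$ for all $i\in F^+(r),j\in F^-(r)$, and the subquivers induced on $F^+(r)$ and $F^-(r)$ are acyclic. An ice fork with point of return $r$ is a quiver with mutable vertices $[n]$ and frozen vertices $u_1,\dots,u_m$ ($m\ge1$) such that each $Q|_{[n]\cup\{u_i\}}$ is a fork with point of return $r$. A mutable vertex adjacent to at least one frozen vertex is red (resp. green) if all arrows between it and frozen vertices point towards (resp. away from) it. *)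

From mathcomp Require Import all_boot all_order all_algebra.
Set Implicit Arguments. Unset Strict Implicit. Unset Printing Implicit Defensive.
Import Order.TTheory GRing.Theory Num.Theory.
Local Open Scope ring_scope.

(* Vertices of a quiver with n mutable vertices ([n] = 'I_n, as inl)
   and m frozen vertices u_1..u_m (as inr). *)
Definition vert (n m : nat) : finType := ('I_n + 'I_m)%type.

Definition is_mutable {n m} (v : vert n m) : bool :=
  if v is inl _ then true else false.
Definition is_frozen {n m} (v : vert n m) : bool := ~~ is_mutable v.

(* A quiver is encoded by its exchange matrix b : b x y = #(x -> y) - #(y -> x).
   No loops / no 2-cycles <=> b is skew_sym-symmetric. *)
Definition bmat (n m : nat) := vert n m -> vert n m -> int.
Definition skew_sym {n m} (b : bmat n m) : Prop := forall x y, b x y = - b y x.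

Definition arrow {n m} (b : bmat n m) (x y : vert n m) : bool :=
  (0 < b x y) && ~~ (is_frozen x && is_frozen y).

Definition pos (z : int) : int := if 0 < z then z else 0.

Definition mutate {n m} (j : 'I_n) (b : bmat n m) : bmat n m :=
  fun x y =>
    if (x == inl j) || (y == inl j) then - b x y
    else b x y + pos (b x (inl j)) * pos (b (inl j) y)
               - pos (b y (inl j)) * pos (b (inl j) x).

Definition has_cycle_on {n m} (b : bmat n m) (S : pred (vert n m)) : Prop :=
  exists (x : vert n m) (s : seq (vert n m)),
    [/\ x \in S, all (fun v => v \in S) s, s != [::],
        path (arrow b) x s & last x s == x].

Definition acyclic_on {n m} (b : bmat n m) (S : pred (vert n m)) : Prop :=
  ~ has_cycle_on b S.

Definition abundant_on {n m} (b : bmat n m) (S : pred (vert n m)) : Prop :=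
  forall x y, x \in S -> y \in S -> x != y -> ~~ (is_frozen x && is_frozen y) ->
    2 <= `|b x y|.

Definition fork_on {n m} (b : bmat n m) (S : pred (vert n m)) (r : vert n m) : Prop :=
  r \in S /\
  (forall u w, u \in S -> w \in S -> is_frozen u -> is_frozen w -> u = w) /\
  abundant_on b S /\
  has_cycle_on b S /\
  acyclic_on b [pred i | (i \in S) && arrow b r i] /\
  acyclic_on b [pred j | (j \in S) && arrow b j r] /\
  (forall i j, i \in S -> j \in S -> arrow b r i -> arrow b j r ->
         b r i < b i j /\ b j r < b i j).

Definition ice_fork {n m} (b : bmat n m) (r : 'I_n) : Prop :=
  (0 < m)%N /\
  forall u : 'I_m,
    fork_on b (fun v => is_mutable v || (v == inr u)) (inl r).

Definition red {n m} (b : bmat n m) (k : 'I_n) : Prop :=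
  (exists u : 'I_m, b (inr u) (inl k) != 0) /\
  (forall u : 'I_m, ~~ arrow b (inl k) (inr u)).

Definition green {n m} (b : bmat n m) (k : 'I_n) : Prop :=
  (exists u : 'I_m, b (inr u) (inl k) != 0) /\
  (forall u : 'I_m, ~~ arrow b (inr u) (inl k)).

From mathcomp Require Import all_boot all_order all_algebra.
From mathcomp Require Import zify.
Set Implicit Arguments. Unset Strict Implicit. Unset Printing Implicit Defensive.
Import Order.TTheory GRing.Theory Num.Theory.
Local Open Scope ring_scope.

(* In a fork every vertex other than the point of return r lies in F+(r) or in
   F-(r), and the fork inequalities force every arrow between F+(r) and F-(r) to
   point from F+(r) to F-(r); with F+(r) and F-(r) acyclic, there is no oriented
   3-cycle avoiding r.  Mutating at j changes b_{uk} by the two path products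
   through j.  For k <> r the product opposing the sign of b_{uk} would come from
   such a 3-cycle u, k, j, so the colour of k survives.  For k = r the colour
   survives when j lies on the same side of r as the frozen vertices, and flips
   otherwise: then the path product dominates since b_{rj} >= 2 (abundance) and
   the middle arrow beats b_{ur} (fork inequality). *)

Lemma pos_id (z : int) : 0 < z -> pos z = z.
Proof. by rewrite /pos => ->. Qed.

Lemma pos_ge0 (z : int) : 0 <= pos z.
Proof. by rewrite /pos; case: ifP => // /ltW. Qed.

Lemma pos_mul_eq0 (y z : int) : ~~ ((0 < y) && (0 < z)) -> pos y * pos z = 0.
Proof. by rewrite /pos; case: ifP => _; case: ifP => _; rewrite ?mulr0 ?mul0r. Qed.

Lemma arrowE n m (b : bmat n m) x y :
  ~~ (is_frozen x && is_frozen y) -> arrow b x y = (0 < b x y).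
Proof. by rewrite /arrow => ->; rewrite andbT. Qed.

Lemma skew_gt0_neq n m (b : bmat n m) x y : skew_sym b -> 0 < b x y -> x != y.
Proof. by move=> skb; apply: contraTneq => ->; move: (skb y y); lia. Qed.

Lemma has_cycle_on3 n m (b : bmat n m) (S : pred (vert n m)) x y z :
  x \in S -> y \in S -> z \in S ->
  arrow b x y -> arrow b y z -> arrow b z x -> has_cycle_on b S.
Proof. by move=> xS yS zS xy yz zx; exists x, [:: y; z; x]; rewrite /= xS yS zS xy yz zx. Qed.

Section Mutation.
Variables (n m : nat) (j : 'I_n) (b : bmat n m).

Lemma mutate_skew : skew_sym b -> skew_sym (mutate j b).
Proof.
move=> skb x y; rewrite /mutate orbC (skb x y).
by case: ifP => _; [|rewrite (skb y x) opprK; lia].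
Qed.

Lemma mutateE x y : x != inl j -> y != inl j ->
  mutate j b x y = b x y + pos (b x (inl j)) * pos (b (inl j) y)
                         - pos (b y (inl j)) * pos (b (inl j) x).
Proof. by rewrite /mutate => /negbTE -> /negbTE ->. Qed.

Lemma mutate_ge x y : x != inl j -> y != inl j ->
  ~~ ((0 < b y (inl j)) && (0 < b (inl j) x)) -> b x y <= mutate j b x y.
Proof.
move=> xj yj no_path; rewrite mutateE // (pos_mul_eq0 no_path) subr0 lerDl.
exact: mulr_ge0 (pos_ge0 _) (pos_ge0 _).
Qed.

Lemma mutate_le x y : x != inl j -> y != inl j ->
  ~~ ((0 < b x (inl j)) && (0 < b (inl j) y)) -> mutate j b x y <= b x y.
Proof.
move=> xj yj no_path; rewrite mutateE // (pos_mul_eq0 no_path) addr0 gerDl oppr_le0.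
exact: mulr_ge0 (pos_ge0 _) (pos_ge0 _).
Qed.

End Mutation.

Section Fork.
Variables (n m : nat) (b : bmat n m) (S : pred (vert n m)) (r0 : vert n m).
Hypotheses (skb : skew_sym b) (forkS : fork_on b S r0) (mut_r0 : is_mutable r0).

Let frozen_r0 : is_frozen r0 = false. Proof. by rewrite /is_frozen mut_r0. Qed.
Let r0S : r0 \in S. Proof. by case: forkS. Qed.

Lemma fork_abundant x y : x \in S -> y \in S -> x != y ->
  ~~ (is_frozen x && is_frozen y) -> 2 <= `|b x y|.
Proof. by case: forkS => _ [_ [abS _]]; apply: abS. Qed.

Lemma fork_side v : v \in S -> v != r0 -> 0 < b r0 v \/ 0 < b v r0.
Proof.
move=> vS vr0; have r0v : r0 != v by rewrite eq_sym.
by have := fork_abundant r0S vS r0v; rewrite frozen_r0 (skb v r0) => /(_ isT); lia.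
Qed.

Lemma fork_out_in i a : i \in S -> a \in S -> 0 < b r0 i -> 0 < b a r0 ->
  b r0 i < b i a /\ b a r0 < b i a.
Proof.
move=> iS aS ri ar; case: forkS => _ [_ [_ [_ [_ [_ fork_ineq]]]]].
by apply: fork_ineq; rewrite // arrowE ?frozen_r0 ?andbF.
Qed.

Lemma fork_no_in_out a c : a \in S -> c \in S -> 0 < b a r0 -> 0 < b r0 c ->
  ~~ arrow b a c.
Proof.
move=> aS cS ar rc; apply/negP => /andP[ac _].
by have [_] := fork_out_in cS aS rc ar; rewrite (skb c a); lia.
Qed.

Lemma fork_no_3cycle x y z : x \in S -> y \in S -> z \in S ->
  arrow b x y -> arrow b y z -> arrow b z x ->
  x != r0 -> y != r0 -> z != r0 -> False.
Proof.
move=> xS yS zS xy yz zx xr yr zr.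
have out v : 0 < b r0 v -> arrow b r0 v by rewrite arrowE ?frozen_r0.
have inn v : 0 < b v r0 -> arrow b v r0 by rewrite arrowE ?frozen_r0 ?andbF.
case: forkS => _ [_ [_ [_ [acyc_out [acyc_in _]]]]].
case: (fork_side xS xr) => hx; case: (fork_side yS yr) => hy;
  case: (fork_side zS zr) => hz;
  try by [ move/negP: (fork_no_in_out xS yS hx hy)
         | move/negP: (fork_no_in_out yS zS hy hz)
         | move/negP: (fork_no_in_out zS xS hz hx) ].
- by apply: acyc_out; apply: (has_cycle_on3 _ _ _ xy yz zx); rewrite inE ?xS ?yS ?zS out.
- by apply: acyc_in; apply: (has_cycle_on3 _ _ _ xy yz zx); rewrite inE ?xS ?yS ?zS inn.
Qed.

Lemma fork_mutate_ge (j : 'I_n) x y : x \in S -> y \in S -> inl j \in S ->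
  x != r0 -> y != r0 -> inl j != r0 -> x != inl j -> y != inl j ->
  arrow b x y -> b x y <= mutate j b x y.
Proof.
move=> xS yS jS xr yr jr xj yj xy; apply: mutate_ge => //.
apply/negP => /andP[yj_pos jx_pos]; apply: (fork_no_3cycle xS yS jS) => //.
  by rewrite arrowE ?andbF.
by rewrite arrowE.
Qed.

Lemma fork_mutate_out_flip (j : 'I_n) a : inl j \in S -> a \in S ->
  0 < b r0 (inl j) -> 0 < b a r0 -> mutate j b a r0 < 0.
Proof.
move=> jS aS rj ar.
have aj : a != inl j by apply: contraTneq ar => ->; rewrite skb; lia.
have [rj_ja ar_ja] := fork_out_in jS aS rj ar.
have := fork_abundant r0S jS (skew_gt0_neq skb rj); rewrite frozen_r0 => /(_ isT) rj2.
have ja : 0 < b (inl j) a := lt_trans ar ar_ja.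
have r0j : r0 != inl j := skew_gt0_neq skb rj.
rewrite mutateE // (pos_mul_eq0 (y := b a (inl j))); last by rewrite (skb a); lia.
by rewrite (pos_id rj) (pos_id ja); nia.
Qed.

Lemma fork_mutate_in_flip (j : 'I_n) i : i \in S -> inl j \in S ->
  0 < b r0 i -> 0 < b (inl j) r0 -> 0 < mutate j b i r0.
Proof.
move=> iS jS ri jr.
have ij : i != inl j by apply: contraTneq ri => ->; rewrite skb; lia.
have [ri_ij jr_ij] := fork_out_in iS jS ri jr.
have := fork_abundant jS r0S (skew_gt0_neq skb jr); rewrite frozen_r0 andbF => /(_ isT) jr2.
have ij_pos : 0 < b i (inl j) := lt_trans ri ri_ij.
have r0j : r0 != inl j by rewrite eq_sym (skew_gt0_neq skb jr).
rewrite mutateE // (pos_mul_eq0 (y := b r0 (inl j))); last by rewrite (skb r0); lia.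
by rewrite (pos_id jr) (pos_id ij_pos) (skb i r0); nia.
Qed.

End Fork.

Lemma red_of_gt0 n m (b : bmat n m) (k : 'I_n) : skew_sym b -> (0 < m)%N ->
  (forall u, 0 < b (inr u) (inl k)) -> red b k.
Proof.
move=> skb m0 pos_uk; split; first by exists (Ordinal m0); rewrite lt0r_neq0.
by move=> u; rewrite arrowE // skb -leNgt oppr_le0 ltW.
Qed.

Lemma green_of_lt0 n m (b : bmat n m) (k : 'I_n) : (0 < m)%N ->
  (forall u, b (inr u) (inl k) < 0) -> green b k.
Proof.
move=> m0 neg_uk; split; first by exists (Ordinal m0); rewrite ltr0_neq0.
by move=> u; rewrite arrowE // -leNgt ltW.
Qed.

Section IceFork.
Variables (n m : nat) (b : bmat n m) (r : 'I_n).
Hypotheses (skb : skew_sym b) (iceb : ice_fork b r).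

Let slice (u : 'I_m) : pred (vert n m) := fun v => is_mutable v || (v == inr u).
Let fork_slice u : fork_on b (slice u) (inl r). Proof. by case: iceb => _; apply. Qed.
Let inl_slice u (x : 'I_n) : inl x \in slice u. Proof. by []. Qed.
Let inr_slice u : inr u \in slice u. Proof. by rewrite unfold_in /slice eqxx. Qed.

Lemma ice_fork_frozen_neq0 u k : b (inr u) (inl k) != 0.
Proof.
have := fork_abundant (fork_slice u) (inr_slice u) (inl_slice u k) isT isT.
by apply: contraTneq => ->.
Qed.

Lemma red_gt0 k : red b k -> forall u, 0 < b (inr u) (inl k).
Proof.
move=> [_ no_out] u; have := no_out u; have := ice_fork_frozen_neq0 u k.
by rewrite arrowE // skb oppr_eq0 oppr_gt0 -leNgt lt_neqAle => -> ->.
Qed.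

Lemma green_lt0 k : green b k -> forall u, b (inr u) (inl k) < 0.
Proof.
move=> [_ no_in] u; have := no_in u; have := ice_fork_frozen_neq0 u k.
by rewrite arrowE // -leNgt lt_neqAle => -> ->.
Qed.

Variables (j : 'I_n).
Hypothesis jr : j != r.

Lemma ice_fork_mutate_gt0 (k : 'I_n) u : k != r -> k != j ->
  0 < b (inr u) (inl k) -> 0 < mutate j b (inr u) (inl k).
Proof.
move=> kr kj uk; apply: (lt_le_trans uk).
by apply: (fork_mutate_ge skb (fork_slice u)) => //; rewrite arrowE.
Qed.

Lemma ice_fork_mutate_lt0 (k : 'I_n) u : k != r -> k != j ->
  b (inr u) (inl k) < 0 -> mutate j b (inr u) (inl k) < 0.
Proof.
move=> kr kj uk; rewrite (mutate_skew j skb) oppr_lt0.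
have ku : 0 < b (inl k) (inr u) by rewrite skb oppr_gt0.
apply: (lt_le_trans ku); apply: (fork_mutate_ge skb (fork_slice u)) => //.
by rewrite arrowE ?andbF.
Qed.

Lemma ice_fork_mutate_return_gt0 : (forall u, 0 < b (inr u) (inl r)) ->
  (forall u, 0 < mutate j b (inr u) (inl r)) \/
  (forall u, mutate j b (inr u) (inl r) < 0).
Proof.
move=> ur; have [rj|rj] := ltP 0 (b (inl r) (inl j)).
  by right=> u; apply: (fork_mutate_out_flip skb (fork_slice u)).
left=> u; apply: (lt_le_trans (ur u)); apply: mutate_ge.
- by [].
- by rewrite eq_sym.
- by rewrite negb_and -leNgt rj.
Qed.

Lemma ice_fork_mutate_return_lt0 : (forall u, b (inr u) (inl r) < 0) ->
  (forall u, 0 < mutate j b (inr u) (inl r)) \/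
  (forall u, mutate j b (inr u) (inl r) < 0).
Proof.
move=> ur; have [jr'|jr'] := ltP 0 (b (inl j) (inl r)).
  left=> u; apply: (fork_mutate_in_flip skb (fork_slice u)) => //.
  by rewrite skb oppr_gt0.
right=> u; apply: (le_lt_trans _ (ur u)); apply: mutate_le.
- by [].
- by rewrite eq_sym.
- by rewrite negb_and orbC -leNgt jr'.
Qed.

End IceFork.

Theorem mainTheorem6 (n m : nat) (b : bmat n m) (r j k : 'I_n) :
  skew_sym b -> ice_fork b r -> j != r -> k != j ->
  red b k \/ green b k ->
  red (mutate j b) k \/ green (mutate j b) k.
Proof.
move=> skb iceb jr kj colour_k; have [m0 _] := iceb.
have colour (k' : 'I_n) : (forall u, 0 < mutate j b (inr u) (inl k')) \/
    (forall u, mutate j b (inr u) (inl k') < 0) ->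
    red (mutate j b) k' \/ green (mutate j b) k'.
  case=> H; [left; exact: red_of_gt0 (mutate_skew j skb) m0 H
            | right; exact: green_of_lt0 m0 H].
case: (eqVneq k r) => [ekr | kr]; apply: colour.
  subst k; case: colour_k => [/(red_gt0 skb iceb) | /(green_lt0 iceb)].
    exact: (ice_fork_mutate_return_gt0 skb iceb jr).
  exact: (ice_fork_mutate_return_lt0 skb iceb jr).
case: colour_k => [/(red_gt0 skb iceb) uk | /(green_lt0 iceb) uk].
  left=> u; exact (ice_fork_mutate_gt0 skb iceb jr kr kj (uk u)).
right=> u; exact (ice_fork_mutate_lt0 skb iceb jr kr kj (uk u)).
Qed.
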